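(* Suppose the neighbor graph $\mathbb N$ (no self-arcs, $m\ge2$ vertices) is strongly connected and let $\mathrm D$ be an ear decomposition of $\mathbb N$. If $\max_{\mathbb E\in\mathrm D} l(\mathbb E)\le n$, where $l(\mathbb E)$ is the number of arcs of the ear $\mathbb E$, then there exist matrices $C_{ji}$ (one per arc $(j,i)$ of $\mathbb N$, each with $n$ columns) with $\ker C_{ji}\ne0$ for every arc such that $\bar{\mathbb N}$ is well-configured.
   Context: Setup: $m$ agents labeled $1,\dots,m$ with states $x_i\in\mathbb R^n$; neighbor graph $\mathbb N$ is a directed graph on $\{1,\dots,m\}$ without self-arcs; each arc $(j,i)$ carries a real matrix $C_{ji}$ with $n$ columns; $\bar{\mathbb N}$ denotes $\mathbb N$ with these matrices. $\bar{\mathbb N}$ is well-configured if for all $x_1,\dots,x_m\in\mathbb R^n$, $C_{ji}x_i=C_{ji}x_j$ for every arc $(j,i)$ implies $x_1=\cdots=x_m$. A directed path is a subgraph with distinct vertices $v_0,\dots,v_k$ ($k\ge1$) and arcs $(v_{r-1},v_r)$; its end-vertices are $v_0,v_k$. A directed cycle is a subgraph with distinct vertices $v_1,\dots,v_k$ ($k\ge 2$) and arcs $(v_r,v_{r+1})$, $r<k$, and $(v_k,v_1)$. An ear decomposition of a directed graph $\mathbb G$ is a sequence of subgraphs $\mathbb E_0,\dots,\mathbb E_p$ such that $\mathbb E_0$ is a directed cycle, each $\mathbb E_i$ ($i\ge1$) is a directed path or directed cycle, the $\mathbb E_i$ are pairwise arc-disjoint with union $\mathbb G$, and for $i\ge1$: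 a cycle $\mathbb E_i$ has exactly one vertex in common with $\bigcup_{k<i}\mathbb E_k$, and a path $\mathbb E_i$ has its two end-vertices as the only vertices in common with $\bigcup_{k<i}\mathbb E_k$. The $\mathbb E_i$ are called ears. *)

From HB Require Import structures.
From mathcomp Require Import all_boot all_order all_algebra.
From mathcomp Require Import reals.
Set Implicit Arguments. Unset Strict Implicit. Unset Printing Implicit Defensive.
Import Order.TTheory GRing.Theory Num.Theory.
Local Open Scope ring_scope.

(* A neighbor graph on vertices 'I_m is a relation N : rel 'I_m;
   N j i means there is an arc (j,i) from j to i. *)

(* An ear is either a directed path [v0; ...; vk] (ear_cyc = false), with arcs
   (v_{r-1}, v_r), or a directed cycle [v1; ...; vk] (ear_cyc = true), with arcs
   (v_r, v_{r+1}) and (v_k, v_1). *)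
Record ear (m : nat) := Ear { ear_cyc : bool; ear_vs : seq 'I_m }.

Definition ear_arcs m (E : ear m) : seq ('I_m * 'I_m) :=
  if ear_cyc E then zip (ear_vs E) (rot 1 (ear_vs E))
  else zip (ear_vs E) (behead (ear_vs E)).

Definition ear_len m (E : ear m) : nat := size (ear_arcs E).

Definition ear_ok m (E : ear m) : bool := uniq (ear_vs E) && (1 < size (ear_vs E))%N.

Definition ear0 m : ear m := Ear false [::].

Definition prev_vs m (D : seq (ear m)) (k : nat) : seq 'I_m :=
  flatten (map (@ear_vs m) (take k D)).

Definition ear_decomposition m (N : rel 'I_m) (D : seq (ear m)) : Prop :=
  [/\
      (0 < size D)%N /\ ear_cyc (nth (ear0 m) D 0),
      all (@ear_ok m) D,
      (forall k l, (k < l)%N -> (l < size D)%N ->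
         forall a, a \in ear_arcs (nth (ear0 m) D k) ->
                   a \notin ear_arcs (nth (ear0 m) D l)),
      (forall v : 'I_m, exists2 k, (k < size D)%N & v \in ear_vs (nth (ear0 m) D k))
      /\ (forall j i : 'I_m, N j i <->
            exists2 k, (k < size D)%N & (j, i) \in ear_arcs (nth (ear0 m) D k)) &
      (forall k, (0 < k)%N -> (k < size D)%N ->
         let E := nth (ear0 m) D k in
         if ear_cyc E then
           exists v : 'I_m, forall u : 'I_m,
             (u \in ear_vs E /\ u \in prev_vs D k) <-> u = v
         else
           forall u : 'I_m,
             (u \in ear_vs E /\ u \in prev_vs D k) <->
             (u = head u (ear_vs E) \/ u = last u (ear_vs E)))].

Definition well_configured (R : pzRingType) m n (N : rel 'I_m)
  (r : 'I_m -> 'I_m -> nat) (C : forall j i : 'I_m, 'M[R]_(r j i, n)) : Prop :=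
  forall x : 'I_m -> 'cV[R]_n,
    (forall j i, N j i -> C j i *m x i = C j i *m x j) ->
    forall i j, x i = x j.

From HB Require Import structures.
From mathcomp Require Import all_boot all_order all_algebra.
From mathcomp Require Import reals.
From mathcomp Require Import zify.
Set Implicit Arguments. Unset Strict Implicit. Unset Printing Implicit Defensive.
Import Order.TTheory GRing.Theory Num.Theory.

(* Label every arc by its position in its ear and let C_ji be the diagonal
   projection killing coordinate lab(j,i); its kernel is the corresponding
   coordinate axis, which exists because every ear has at most n arcs.
   Fix a coordinate a: every arc not labelled a forces equality of the a-th
   coordinates of its ends, and each ear has at most one arc labelled a.
   Removing one arc from a cycle leaves it connected, and removing one arc
   from a path leaves every vertex joined to one of its end-vertices; hence,
   by induction along the decomposition, the a-th coordinate is the same at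
   every vertex. *)

Lemma nat_chain_eq (U : Type) (g : nat -> U) a b :
  (a <= b)%N -> (forall r, (a <= r < b)%N -> g r = g r.+1) -> g a = g b.
Proof.
elim: b => [|b IH]; first by rewrite leqn0 => /eqP ->.
rewrite leq_eqVlt ltnS => /predU1P [-> //|leab] gS.
rewrite (IH leab) => [|r /andP [? ?]]; apply: gS; lia.
Qed.

Lemma walk_cut_link (T : eqType) (U : Type) (f : T -> U) x0 (w : seq T) k :
  (forall r, (r.+1 < size w)%N -> r != k ->
     f (nth x0 w r) = f (nth x0 w r.+1)) ->
  forall u, u \in w -> f u = f (head x0 w) \/ f u = f (last x0 w).
Proof.
move=> fw u /(nthP x0) [r ltrw <-]; rewrite -nth0 -nth_last.
pose g q := f (nth x0 w q); rewrite -/(g _) -/(g 0) -/(g _).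
have [lerk|ltkr] := leqP r k; [left | right].
  by symmetry; apply: nat_chain_eq => // q ?; apply: fw; [|apply/eqP]; lia.
by apply: nat_chain_eq => [|q ?]; [lia | apply: fw; [|apply/eqP]; lia].
Qed.

Section Ears.

Variable m : nat.
Implicit Types E : ear m.

Definition ear_walk E : seq 'I_m :=
  if ear_cyc E then ear_vs E ++ take 1 (ear_vs E) else ear_vs E.

Lemma ear_arcsE E : ear_arcs E = zip (ear_walk E) (behead (ear_walk E)).
Proof.
rewrite /ear_arcs /ear_walk; case: (ear_cyc E) => //.
case: (ear_vs E) => [//|x s]; rewrite rot1_cons -cats1 /= take0.
by rewrite -cat_cons -{2}(cats0 (s ++ [:: x])) zip_cat ?cats0 // size_cat addn1.
Qed.

Lemma ear_arcs_uniq E : uniq (ear_vs E) -> uniq (ear_arcs E).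
Proof. by rewrite /ear_arcs; case: (ear_cyc E); apply: zip_uniql. Qed.

Lemma mem_ear_walk E : ear_walk E =i ear_vs E.
Proof.
rewrite /ear_walk; case: (ear_cyc E) => // u; rewrite mem_cat orb_idr //.
by move/mem_take.
Qed.

Lemma ear_walk_cyc_ends E x0 :
  ear_cyc E -> last x0 (ear_walk E) = head x0 (ear_walk E).
Proof.
by rewrite /ear_walk => ->; case: (ear_vs E) => [|x s] //=; rewrite take0 cats1 last_rcons.
Qed.

Lemma ear_cut_arc (U : Type) (f : 'I_m -> U) E k :
  uniq (ear_vs E) ->
  (forall j i, (j, i) \in ear_arcs E -> index (j, i) (ear_arcs E) != k ->
     f j = f i) ->
  if ear_cyc E then {in ear_vs E &, forall u v, f u = f v}
  else forall u, u \in ear_vs E ->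
         f u = f (head u (ear_vs E)) \/ f u = f (last u (ear_vs E)).
Proof.
move=> uniqE fE; set w := ear_walk E.
have fw x0 r : (r.+1 < size w)%N -> r != k ->
    f (nth x0 w r) = f (nth x0 w r.+1).
  move=> ltrw nerk; have ltra : (r < size (ear_arcs E))%N.
    by rewrite ear_arcsE -/w size_zip size_behead; lia.
  have nth_arc : nth (x0, x0) (ear_arcs E) r = (nth x0 w r, nth x0 w r.+1).
    by rewrite ear_arcsE -/w nth_zip_cond -/w -(ear_arcsE E) ltra nth_behead.
  have := mem_nth (x0, x0) ltra; rewrite nth_arc => arc_r.
  by apply: fE arc_r _; rewrite -nth_arc index_uniq ?ear_arcs_uniq.
have cut x0 u : u \in ear_vs E ->
    f u = f (head x0 w) \/ f u = f (last x0 w).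
  by move=> Eu; apply: (walk_cut_link (fw x0)); rewrite mem_ear_walk.
case cycE: (ear_cyc E) => /=; last first.
  by move=> u Eu; have := cut u u Eu; rewrite /w /ear_walk cycE.
move=> u v Eu Ev.
have to_head x : {in ear_vs E, forall y, f y = f (head x w)}.
  by move=> y Ey; case: (cut x y Ey); rewrite /w ?ear_walk_cyc_ends.
by rewrite (to_head u u Eu) (to_head u v Ev).
Qed.

End Ears.

Lemma mem_prev_vs m (D : seq (ear m)) t u : u \in prev_vs D t ->
  exists2 t', (t' < t)%N & u \in ear_vs (nth (ear0 m) D t').
Proof.
elim: D t => [|E D IH] [|t] //=; rewrite mem_cat => /orP [Eu | /IH [t' ltt' Eu]].
  by exists 0%N.
by exists t'.+1.
Qed.

Section EarDecomposition.

Variables (m : nat) (N : rel 'I_m) (D : seq (ear m)).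
Hypothesis decD : ear_decomposition N D.

Local Notation ear_ D t := (nth (ear0 m) D t).

Definition arc_label (j i : 'I_m) : nat :=
  index (j, i) (ear_arcs (ear_ D (find (fun E => (j, i) \in ear_arcs E) D))).

Lemma arc_labelE t j i : (t < size D)%N -> (j, i) \in ear_arcs (ear_ D t) ->
  arc_label j i = index (j, i) (ear_arcs (ear_ D t)).
Proof.
case: decD => _ _ disjD _ _ ltt arc_t; rewrite /arc_label.
set p := fun E : ear m => (j, i) \in ear_arcs E.
have: has p D by apply/(has_nthP (ear0 m)); exists t.
move=> /(nth_find (ear0 m)) arc_f.
case: (ltngtP (find p D) t) => [ltft|ltft|-> //].
  by have := disjD _ _ ltft ltt _ arc_f; rewrite arc_t.
by have := before_find (ear0 m) ltft; rewrite /p arc_t.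
Qed.

Lemma arc_label_lt n j i : all (fun E => (ear_len E <= n)%N) D -> N j i ->
  (arc_label j i < n)%N.
Proof.
case: decD => _ _ _ [_ arcsN] _ lenD /arcsN [t ltt arc_t].
rewrite (arc_labelE ltt arc_t); apply: leq_trans (all_nthP (ear0 m) lenD t ltt).
by rewrite /ear_len index_mem.
Qed.

Lemma ear_decomposition_cut_label (U : Type) (f : 'I_m -> U) k :
  (forall j i, N j i -> arc_label j i != k -> f j = f i) ->
  forall u v, f u = f v.
Proof.
move=> fN u v; have [[_ cyc0] okD _ [vsD arcsN] attD] := decD.
have uniqD t : (t < size D)%N -> uniq (ear_vs (ear_ D t)).
  by move=> ltt; have /andP [] := all_nthP (ear0 m) okD t ltt.
have fD t : (t < size D)%N -> forall j i, (j, i) \in ear_arcs (ear_ D t) ->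
    index (j, i) (ear_arcs (ear_ D t)) != k -> f j = f i.
  move=> ltt j i arc_t; rewrite -(arc_labelE ltt arc_t).
  by apply: fN; apply/arcsN; exists t.
have cutE t (ltt : (t < size D)%N) := ear_cut_arc (uniqD t ltt) (fD t ltt).
set c := f (head u (ear_vs (ear_ D 0))).
suff constD t : (t < size D)%N -> {in ear_vs (ear_ D t), forall w, f w = c}.
  have [tu ltu Eu] := vsD u; have [tv ltv Ev] := vsD v.
  by rewrite (constD tu) ?(constD tv).
elim/ltn_ind: t => t IH ltt.
have prevc : {in prev_vs D t, forall w, f w = c}.
  move=> w /mem_prev_vs [t' ltt' Ew].
  exact: IH ltt' (ltn_trans ltt' ltt) _ Ew.
case: (posnP t) => [t0 | tpos].
  move: ltt (cutE t ltt); rewrite t0 cyc0 => lt0 cst w Ew; apply: cst Ew _.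
  have /andP [_ /ltnW] := all_nthP (ear0 m) okD 0 lt0.
  by rewrite -nth0; apply: mem_nth.
move: (cutE t ltt) (attD t tpos ltt) => /=; case: ear_cyc.
  move=> cst [v0 attv0] w Ew; have [Ev0 prevv0] := (attv0 v0).2 erefl.
  by rewrite (cst w v0 Ew Ev0) prevc.
case: (ear_vs (ear_ D t)) => [//|x s] cut attend w Ew.
have [_ /prevc headc] := (attend x).2 (or_introl erefl).
have [_ /prevc lastc] := (attend (last x s)).2 (or_intror erefl).
by case: (cut w Ew) => ->.
Qed.

End EarDecomposition.

Local Open Scope ring_scope.

Definition drop_coord_mx (R : pzSemiRingType) n (k : nat) : 'M[R]_n :=
  diag_mx (\row_a (nat_of_ord a != k)%:R).
Arguments drop_coord_mx {R n}.

Lemma drop_coord_mxE (R : pzSemiRingType) n p k (x : 'M[R]_(n, p)) a b :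
  (drop_coord_mx k *m x) a b = if nat_of_ord a == k then 0 else x a b.
Proof. by rewrite mul_diag_mx !mxE; case: eqP; rewrite ?mul0r ?mul1r. Qed.

Lemma drop_coord_mx_ker (R : nzRingType) n k : (k < n)%N ->
  exists2 v : 'cV[R]_n, v != 0 & drop_coord_mx k *m v = 0.
Proof.
move=> ltkn; exists (delta_mx (Ordinal ltkn) 0).
  apply/negP => /eqP /matrixP /(_ (Ordinal ltkn) 0).
  by rewrite !mxE !eqxx; apply/eqP; rewrite oner_eq0.
apply/matrixP => a b; rewrite drop_coord_mxE !mxE.
by case: ifP => // /negbT nak; rewrite -val_eqE /= (negbTE nak).
Qed.

Theorem corollary4 (R : realType) (m n : nat) (N : rel 'I_m)
  (D : seq (ear m)) :
  (2 <= m)%N ->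
  (forall i : 'I_m, ~~ N i i) ->
  (forall i j : 'I_m, connect N i j) ->
  ear_decomposition N D ->
  all (fun E => (ear_len E <= n)%N) D ->
  exists (r : 'I_m -> 'I_m -> nat) (C : forall j i : 'I_m, 'M[R]_(r j i, n)),
    (forall j i : 'I_m, N j i ->
       exists2 v : 'cV[R]_n, v != 0 & C j i *m v = 0) /\
    well_configured N C.
Proof.
move=> _ _ _ decD lenD.
exists (fun _ _ => n), (fun j i => drop_coord_mx (arc_label D j i)); split.
  by move=> j i Nji; apply/drop_coord_mx_ker/(arc_label_lt decD lenD Nji).
move=> x Cx i j; apply/matrixP => a b; rewrite (ord1 b).
apply: (ear_decomposition_cut_label decD (f := fun u => x u a 0) (k := a)).
move=> j' i' Nji' labna; have /matrixP /(_ a 0) := Cx j' i' Nji'.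
by rewrite !drop_coord_mxE eq_sym (negbTE labna).
Qed.
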